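(* Let $f$ be a real (or complex) polynomial of exact degree $d\ge0$. Define functions on integers by $F_0(x)=1$ and, for $i\ge1$ and integers $x\ge i-1$, $$F_i(x)=\sum_{m=i}^{x}f(m-i+1)\,F_{i-1}(m)$$ (an empty sum being $0$). Then for each $i\ge 0$ there is a polynomial $P_i$ of exact degree $i(d+1)$ such that $F_i(x)=P_i(x)$ for all integers $x\ge i-1$. In particular, if $\lambda_p\mu_p=f(p)$ for all $p\ge1$, then the quantity $c_{k,\delta}$ equals $\big(\prod_{i=1}^{\delta}\lambda_i\big)P_j\big((k+\delta)/2\big)$ with $j=(k-\delta)/2$, where $P_j$ is a polynomial of degree $j(d+1)$ not depending on $\delta$ (so for $\delta=0$, $c_{k,0}$ is the value at $k/2$ of a polynomial of degree $\tfrac{k}{2}(d+1)$).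
   Context: $c_{k,\delta}=\big(\prod_{i=1}^{\delta}\lambda_i\big)\sum\prod_{i=1}^{j}\lambda_{m_i-i+1}\mu_{m_i-i+1}$, the sum ranging over integer tuples $(m_1,\dots,m_j)$ with $m_i\ge i$ and $m_1\le m_2\le\cdots\le m_j\le (k+\delta)/2$, where $j=(k-\delta)/2$, $0\le\delta\le k$, $k-\delta$ even, and $\lambda_i,\mu_i$ are scalars. *)

From HB Require Import structures.
From mathcomp Require Import all_boot all_order all_algebra.
Set Implicit Arguments. Unset Strict Implicit. Unset Printing Implicit Defensive.
Import Order.TTheory GRing.Theory Num.Theory.
Local Open Scope ring_scope.

(* Here i = i'.+1, so f(m - i + 1) = f(m - i'). Defined for all nat x;
   the paper only uses x >= i - 1. *)
Fixpoint Fseq (R : nzRingType) (f : {poly R}) (i : nat) (x : nat) : R :=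
  match i with
  | 0 => 1
  | i'.+1 => \sum_(i'.+1 <= m < x.+1) f.[(m - i')%:R] * Fseq f i' m
  end.

(* c_{k,delta} = (prod_{i=1}^{delta} lam_i) *
     sum over (m_1,...,m_j), m_i >= i, m_1 <= ... <= m_j <= (k+delta)/2,
     of prod_{i=1}^{j} lam_{m_i-i+1} mu_{m_i-i+1},  j = (k - delta)/2.
   Tuples are indexed 0-based: t : 'I_j -> 'I_(N+1), t i = m_{i+1},
   condition m_{i+1} >= i+1, term lam_{t i - i} mu_{t i - i}. *)
Definition ckd (R : nzRingType) (lam mu : nat -> R) (k delta : nat) : R :=
  let j := ((k - delta)./2)%N in
  let N := ((k + delta)./2)%N in
  (\prod_(1 <= i < delta.+1) lam i) *
  \sum_(t : {ffun 'I_j -> 'I_N.+1} |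
          [forall i : 'I_j, (i.+1 <= t i)%N] &&
          [forall i : 'I_j, forall i2 : 'I_j, (i <= i2)%N ==> (t i <= t i2)%N])
     \prod_(i < j) (lam (t i - i)%N * mu (t i - i)%N).

(* Writing [F_i(x) = sum_(i <= m <= x) q(m)] with [q(m) = f(m - i + 1) F_(i-1)(m)],
   the degree grows by [d + 1] at each step: multiplying by the shifted [f]
   adds [d], and in characteristic 0 every polynomial [q] of degree [e] has a
   discrete antiderivative [S], [S(x) - S(x - 1) = q(x)], of degree [e + 1],
   so the sum is [S(x) - S(i - 1)].  The formula for [c_(k,delta)] is the
   same recursion read combinatorially: splitting a nondecreasing tuple
   [m_1 <= ... <= m_j] at its last entry [m_j = m] yields the summand
   [f(m - j + 1) F_(j-1)(m)]. *)

From HB Require Import structures.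
From mathcomp Require Import all_boot all_order all_algebra.
From mathcomp Require Import ring zify.
Set Implicit Arguments.
Unset Strict Implicit.
Unset Printing Implicit Defensive.

Import Order.TTheory GRing.Theory Num.Theory.
Local Open Scope ring_scope.

Lemma size_sub_same_lead (R : nzRingType) (p q : {poly R}) :
  size p = size q -> lead_coef p = lead_coef q -> (size (p - q)%R <= (size p).-1)%N.
Proof.
move=> spq lpq; apply/leq_sizeP => j hj; rewrite coefB.
have [->|neq_j] := eqVneq j (size p).-1.
  by rewrite [in X in _ - X]spq -!lead_coefE lpq subrr.
have hpj : (size p <= j)%N by move: hj neq_j; case: (size p) => //= n; lia.
by rewrite !nth_default ?subrr // -spq.
Qed.

Section BackwardDifference.
Variable R : fieldType.

Definition bdiff (p : {poly R}) : {poly R} := p - (p \Po ('X - 1)).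

Lemma horner_bdiff p x : (bdiff p).[x] = p.[x] - p.[x - 1].
Proof. by rewrite /bdiff hornerD hornerN horner_comp !hornerE. Qed.

Lemma bdiffD p q : bdiff (p + q) = bdiff p + bdiff q.
Proof. by rewrite /bdiff comp_polyD; ring. Qed.

Lemma bdiffZ c p : bdiff (c *: p) = c *: bdiff p.
Proof. by rewrite /bdiff comp_polyZ scalerBr. Qed.

Lemma size_bdiff p : (size (bdiff p) <= (size p).-1)%N.
Proof.
have sX1 : size ('X - 1 : {poly R}) = 2 by rewrite size_XsubC.
apply: size_sub_same_lead; first by rewrite size_comp_poly2.
by rewrite lead_coef_comp ?sX1 // lead_coefXsubC expr1n mulr1.
Qed.

Lemma size_bdiffXn_sub n :
  (size (bdiff 'X^(n.+1) - 'X^n *+ n.+1)%R <= n)%N.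
Proof.
elim: n => [|n IH].
  by rewrite /bdiff comp_Xn_poly !expr1 expr0 (_ : _ - _ = 0) ?size_poly0 //; ring.
have -> : bdiff 'X^(n.+2) - 'X^(n.+1) *+ n.+2
        = ('X - 1) * (bdiff 'X^(n.+1) - 'X^n *+ n.+1) - 'X^n *+ n.+1.
  by rewrite /bdiff !comp_Xn_poly !exprS; ring.
apply: (leq_trans (size_polyD _ _)); rewrite geq_max size_polyN.
apply/andP; split.
  by apply: (leq_trans (size_polyMleq _ _)); rewrite size_XsubC.
by rewrite -scaler_nat (leq_trans (size_scale_leq _ _)) ?size_polyXn.
Qed.

Hypothesis charR0 : [pchar R] =i pred0.

Lemma bdiff_antiderivative (q : {poly R}) :
  {S : {poly R} | bdiff S = q & (size S <= (size q).+1)%N}.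
Proof.
move: {2}(size q) (leqnn (size q)) => n; elim: n q => [|n IH] q le_qn.
  have -> : q = 0 by apply/eqP; rewrite -size_poly_leq0.
  by exists 0; rewrite ?size_poly0 // /bdiff comp_poly0 subr0.
case: (ltnP (size q) n.+1) => [/IH//|sqn].
have sq : size q = n.+1 by apply/eqP; rewrite eqn_leq le_qn sqn.
have n1_neq0 : (n.+1)%:R != 0 :> R by rewrite (pcharf0P _).1.
pose k := lead_coef q / (n.+1)%:R.
pose T := k *: 'X^(n.+1).
(* [bdiff T] has leading term [k (n+1) X^n = lead_coef q X^n]. *)
have sq' : (size (q - bdiff T)%R <= n)%N.
  have -> : q - bdiff T = (q - lead_coef q *: 'X^n)
                           - k *: (bdiff 'X^(n.+1) - 'X^n *+ n.+1).
    have kn : k * (n.+1)%:R = lead_coef q by rewrite divfK.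
    by rewrite -scaler_nat [in RHS]scalerBr scalerA kn /T bdiffZ; ring.
  apply: (leq_trans (size_polyD _ _)); rewrite geq_max size_polyN.
  rewrite (leq_trans (size_scale_leq _ _)) ?size_bdiffXn_sub // andbT.
  have -> : n = (size q).-1 by rewrite sq.
  apply: size_sub_same_lead; last by rewrite lead_coefZ lead_coefXn mulr1.
  by rewrite size_scale ?lead_coef_eq0 -?size_poly_gt0 ?sq // size_polyXn.
have [S' dS' sS'] := IH _ sq'.
exists (T + S'); first by rewrite bdiffD dS'; ring.
apply: (leq_trans (size_polyD _ _)); rewrite geq_max sq.
rewrite (leq_trans (size_scale_leq _ _)) ?size_polyXn //=.
by apply: (leq_trans sS'); rewrite ltnS (leq_trans sq').
Qed.

End BackwardDifference.

Section FseqPolynomial.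
Variables (R : fieldType) (f : {poly R}).
Hypotheses (charR0 : [pchar R] =i pred0) (f_neq0 : f != 0).

Lemma Fseq_poly i :
  {p : {poly R} | size p = (i * size f).+1 &
                  forall x, (i.-1 <= x)%N -> Fseq f i x = p.[x%:R]}.
Proof.
elim: i => [|i [p sp Fp]].
  by exists 1; rewrite ?size_poly1 // => x _; rewrite hornerC.
pose q := (f \Po ('X - (i%:R)%:P)) * p.
have sq : size q = (i.+1 * size f)%N.
  have sfi : size (f \Po ('X - (i%:R)%:P)) = size f.
    by rewrite size_comp_poly2 ?size_XsubC.
  by rewrite size_mul -?size_poly_gt0 ?sfi ?sp ?muln_gt0 ?size_poly_gt0 // addnS mulSn.
have q_neq0 : q != 0 by rewrite -size_poly_gt0 sq muln_gt0 size_poly_gt0 f_neq0.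
have [S dS leS] := bdiff_antiderivative charR0 q.
have {leS} sS : size S = (size q).+1.
  apply/eqP; rewrite eqn_leq leS /=.
  have /polySpred -> : S != 0.
    by apply: contra_neq q_neq0 => S0; rewrite -dS S0 /bdiff comp_poly0 subr0.
  by rewrite ltnS -dS size_bdiff.
exists (S - (S.[i%:R])%:P).
  rewrite size_polyDl sS -?sq // size_polyN (leq_ltn_trans (size_polyC_leq1 _)) //.
  by rewrite ltnS size_poly_gt0.
move=> x /= le_ix; rewrite big_add1 /= hornerD hornerN hornerC.
apply: (telescope_sumr_eq (fun m => S.[m%:R])) => // m /andP[le_im _].
have -> : S.[m.+1%:R] - S.[m%:R] = q.[m.+1%:R] by rewrite -dS horner_bdiff -natr1 addrK.
rewrite /q hornerM horner_comp hornerXsubC -natrB ?(leq_trans le_im) // -Fp //=.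
exact: leq_trans (leq_pred i) (leq_trans le_im _).
Qed.

End FseqPolynomial.

(* The ambient type ['I_M] stays fixed while the bound [N] varies in the
   induction of [sum_staircase_Fseq]. *)
Definition staircase (j M N : nat) (t : {ffun 'I_j -> 'I_M}) : bool :=
  [&& [forall i : 'I_j, (i.+1 <= t i)%N],
      [forall i : 'I_j, forall i2 : 'I_j, (i <= i2)%N ==> (t i <= t i2)%N]
    & [forall i : 'I_j, (t i <= N)%N]].
Arguments staircase {j M} N t.

Definition ffun_rcons (j M : nat) (mt : 'I_M * {ffun 'I_j -> 'I_M}) :
  {ffun 'I_j.+1 -> 'I_M} :=
  [ffun i => if unlift ord_max i is Some i' then mt.2 i' else mt.1].

Lemma ffun_rcons_max j M mt : @ffun_rcons j M mt ord_max = mt.1.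
Proof. by rewrite ffunE unlift_none. Qed.

Lemma ffun_rcons_lift j M mt (i : 'I_j) : @ffun_rcons j M mt (lift ord_max i) = mt.2 i.
Proof. by rewrite ffunE liftK. Qed.

Lemma ffun_rcons_bij j M : bijective (@ffun_rcons j M).
Proof.
exists (fun t : {ffun 'I_j.+1 -> 'I_M} =>
          (t ord_max, [ffun i : 'I_j => t (lift ord_max i)])).
  case=> m g; rewrite ffun_rcons_max; congr pair; apply/ffunP => i.
  by rewrite ffunE ffun_rcons_lift.
move=> t; apply/ffunP => i; rewrite ffunE.
by case: unliftP => [i' ->|->] /=; rewrite ?ffunE.
Qed.

Lemma staircase_rcons j M N m g :
  staircase N (@ffun_rcons j M (m, g)) = (j < m <= N)%N && staircase m g.
Proof.
apply/idP/idP.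
  case/and3P => /forallP A1 /forallP A2 /forallP A3.
  have := A1 ord_max; rewrite ffun_rcons_max /= => h1.
  have := A3 ord_max; rewrite ffun_rcons_max /= => h3.
  rewrite h1 h3 /=; apply/and3P; split.
  - apply/forallP => i; have := A1 (lift ord_max i).
    by rewrite ffun_rcons_lift lift_max.
  - apply/forallP => i; apply/forallP => i2; apply/implyP => le.
    have := A2 (lift ord_max i); move/forallP/(_ (lift ord_max i2)).
    by rewrite !ffun_rcons_lift !lift_max le.
  - apply/forallP => i; have := A2 (lift ord_max i).
    move/forallP/(_ ord_max); rewrite ffun_rcons_lift ffun_rcons_max lift_max /=.
    by rewrite (ltnW (ltn_ord i)).
case/andP => [/andP [h1 h3]] /and3P [/forallP A1 /forallP A2 /forallP A3].
apply/and3P; split.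
- apply/forallP => i; case: (unliftP ord_max i) => [i' ->|->].
    by rewrite ffun_rcons_lift lift_max.
  by rewrite ffun_rcons_max.
- apply/forallP => i; apply/forallP => i2; apply/implyP.
  case: (unliftP ord_max i) => [i' ->|->]; case: (unliftP ord_max i2) => [i2' ->|->].
  + rewrite !ffun_rcons_lift !lift_max => le; exact: (implyP (forallP (A2 i') i2') le).
  + by rewrite ffun_rcons_lift ffun_rcons_max => _; apply: A3.
  + rewrite lift_max /= => le; exfalso; move: (ltn_ord i2').
    by rewrite ltnNge le.
  + by rewrite ffun_rcons_max.
- apply/forallP => i; case: (unliftP ord_max i) => [i' ->|->].
    by rewrite ffun_rcons_lift (leq_trans (A3 i') h3).
  by rewrite ffun_rcons_max.
Qed.

Lemma sum_staircase_Fseq (R : comNzRingType) (f : {poly R}) (M j N : nat) :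
  (N < M)%N ->
  \sum_(t : {ffun 'I_j -> 'I_M} | staircase N t) \prod_(i < j) f.[(t i - i)%:R]
  = Fseq f j N.
Proof.
elim: j N => [|j IH] N ltNM.
  rewrite (eq_bigl xpredT) => [|t]; last first.
    by rewrite /staircase; apply/and3P; split; apply/forallP; case.
  under eq_bigr do rewrite big_ord0.
  by rewrite sumr_const card_ffun !card_ord expn0.
rewrite (reindex (@ffun_rcons j M)) /=; last exact/onW_bij/ffun_rcons_bij.
rewrite (eq_bigl (fun mg : 'I_M * {ffun 'I_j -> 'I_M} =>
                    (j < mg.1 <= N)%N && staircase mg.1 mg.2)); last first.
  by case=> m g; rewrite staircase_rcons.
rewrite (eq_bigr (fun mg : 'I_M * {ffun 'I_j -> 'I_M} =>
            (\prod_(i < j) f.[(mg.2 i - i)%:R]) * f.[(mg.1 - j)%:R])); last first.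
  case=> m g _; rewrite big_ord_recr ffun_rcons_max; congr (_ * _).
  apply: eq_bigr => i _.
  have -> : widen_ord (leqnSn j) i = lift ord_max i.
    by apply: val_inj; rewrite /= /bump leqNgt ltn_ord.
  by rewrite ffun_rcons_lift lift_max.
rewrite -(pair_big_dep (fun m : 'I_M => (j < m <= N)%N) (fun m g => staircase m g)
  (fun m g => (\prod_(i < j) f.[(g i - i)%:R]) * f.[(m - j)%:R])) /=.
rewrite (eq_bigr (fun m : 'I_M => Fseq f j m * f.[(m - j)%:R])); last first.
  by move=> m _; rewrite -big_distrl /= IH.
rewrite [RHS]/= (big_nat_widenl _ 0) // (big_nat_widen _ _ M) // big_mkord.
by apply: eq_big => [m|m _]; [rewrite ltnS | exact: mulrC].
Qed.

Theorem mainTheorem7 (R : numFieldType) (d : nat) (f : {poly R})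
    (hf : size f = d.+1) :
  exists P : nat -> {poly R},
    (forall i : nat,
        size (P i) = (i * d.+1).+1 /\
        (forall x : nat, (i.-1 <= x)%N -> Fseq f i x = (P i).[x%:R])) /\
    (forall lam mu : nat -> R,
        (forall p : nat, (0 < p)%N -> lam p * mu p = f.[p%:R]) ->
        forall k delta : nat, (delta <= k)%N -> ~~ odd (k - delta) ->
          ckd lam mu k delta =
          (\prod_(1 <= i < delta.+1) lam i) *
          (P ((k - delta)./2)%N).[((k + delta)./2)%:R]).
Proof.
have f_neq0 : f != 0 by rewrite -size_poly_gt0 hf.
pose P i := s2val (Fseq_poly (pchar_num R) f_neq0 i).
have P_Fseq i : forall x, (i.-1 <= x)%N -> Fseq f i x = (P i).[x%:R].
  exact: s2valP' (Fseq_poly _ f_neq0 i).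
exists P; split=> [i|lam mu lam_mu k delta _ _].
  by split; [rewrite /P (s2valP (Fseq_poly _ f_neq0 i)) hf | exact: P_Fseq].
rewrite /ckd; congr (_ * _).
set j := ((k - delta)./2)%N; set N := ((k + delta)./2)%N.
have le_jN : (j.-1 <= N)%N.
  rewrite (leq_trans (leq_pred j)) // half_leq //.
  exact: leq_trans (leq_subr _ _) (leq_addr _ _).
rewrite -P_Fseq // -(sum_staircase_Fseq f j (ltnSn N)).
apply: eq_big => [t|t /andP[/forallP ge_ti _]].
  rewrite /staircase (_ : [forall i, t i <= N]%N) ?andbT //.
  by apply/forallP => i; rewrite -ltnS.
by apply: eq_bigr => i _; rewrite lam_mu // subn_gt0; exact: ge_ti.
Qed.
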